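(* Let $Z$ be a separable real Hilbert space and let $f:Z\to\mathbb{R}$ be a continuous convex function. Then there exist a unique closed linear subspace $X_f$ of $Z$, a unique vector $v_f\in X_f^{\perp}$, and a unique essentially directionally coercive convex function $c_f:X_f\to\mathbb{R}$ such that $$f(z)=c_f(P_{X_f}(z))+\langle v_f,z\rangle\quad\text{for all } z\in Z.$$ Moreover, $X_f=\overline{\mathrm{span}}\{u-w: u\in\partial f(z),\ w\in\partial f(y),\ z,y\in Z\}$, and $v_f=Q_{X_f}(\xi_0)$ for any $z_0\in Z$ and any $\xi_0\in\partial f(z_0)$, where $Q_{X_f}=I-P_{X_f}$ is the orthogonal projection of $Z$ onto $X_f^{\perp}$.
   Context: For a closed linear subspace $X$ of a Hilbert space $Z$, $P_X:Z\to X$ denotes the orthogonal projection and $X^\perp$ the orthogonal complement; $\overline{\mathrm{span}}(V)$ is the closure of the linear span of $V$. For a convex $f:Z\to\mathbb{R}$, $\partial f(x)=\{\xi\in Z: f(y)\ge f(x)+\langle \xi,y-x\rangle \text{ for all } y\in Z\}$. A function $g$ on a Banach space $X$ is directionally coercive if $\lim_{t\to\infty} g(x+tv)=\infty$ for every $x\in X$ and every $v\in X\setminus\{0\}$; it is essentially directionally coercive if there exists a continuous linear functional $\ell\in X^*$ such that $g-\ell$ is directionally coercive. *)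

From Stdlib Require Import Reals Lra Classical ClassicalEpsilon.
Open Scope R_scope.

Record PreHilbert := {
  hcar :> Type;
  hzero : hcar;
  hadd : hcar -> hcar -> hcar;
  hopp : hcar -> hcar;
  hscal : R -> hcar -> hcar;
  hinner : hcar -> hcar -> R;
  hadd_assoc : forall x y z, hadd x (hadd y z) = hadd (hadd x y) z;
  hadd_comm : forall x y, hadd x y = hadd y x;
  hadd_0l : forall x, hadd hzero x = x;
  hadd_oppr : forall x, hadd x (hopp x) = hzero;
  hscal_assoc : forall a b x, hscal a (hscal b x) = hscal (a * b) x;
  hscal_1 : forall x, hscal 1 x = x;
  hscal_addr : forall a x y, hscal a (hadd x y) = hadd (hscal a x) (hscal a y);
  hscal_addl : forall a b x, hscal (a + b) x = hadd (hscal a x) (hscal b x);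
  hinner_sym : forall x y, hinner x y = hinner y x;
  hinner_addl : forall x y z, hinner (hadd x y) z = hinner x z + hinner y z;
  hinner_scall : forall a x y, hinner (hscal a x) y = a * hinner x y;
  hinner_pos : forall x, 0 <= hinner x x;
  hinner_def : forall x, hinner x x = 0 -> x = hzero
}.

Arguments hzero {_}. Arguments hadd {_}. Arguments hopp {_}.
Arguments hscal {_}. Arguments hinner {_}.

Definition hsub {Z : PreHilbert} (x y : Z) : Z := hadd x (hopp y).
Definition hnorm {Z : PreHilbert} (x : Z) : R := sqrt (hinner x x).

Definition hCauchy {Z : PreHilbert} (u : nat -> Z) : Prop :=
  forall eps, 0 < eps -> exists N, forall m n, (N <= m)%nat -> (N <= n)%nat ->
    hnorm (hsub (u m) (u n)) < eps.
Definition hconverges {Z : PreHilbert} (u : nat -> Z) (l : Z) : Prop :=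
  forall eps, 0 < eps -> exists N, forall n, (N <= n)%nat -> hnorm (hsub (u n) l) < eps.

Record Hilbert := {
  hpre :> PreHilbert;
  hcomplete : forall u : nat -> hpre, hCauchy u -> exists l, hconverges u l
}.

Definition separable (Z : Hilbert) : Prop :=
  exists d : nat -> Z, forall z eps, 0 < eps -> exists n, hnorm (hsub (d n) z) < eps.

Definition closed_subspace {Z : PreHilbert} (X : Z -> Prop) : Prop :=
  X hzero /\
  (forall x y, X x -> X y -> X (hadd x y)) /\
  (forall a x, X x -> X (hscal a x)) /\
  (forall u l, (forall n, X (u n)) -> hconverges u l -> X l).

Definition orth {Z : PreHilbert} (X : Z -> Prop) (v : Z) : Prop :=
  forall x, X x -> hinner v x = 0.

Definition is_proj {Z : PreHilbert} (X : Z -> Prop) (z p : Z) : Prop :=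
  X p /\ orth X (hsub z p).

(** The orthogonal projection P_X (chosen by epsilon; it exists and is unique
    when X is a closed subspace of a Hilbert space). *)
Definition proj {Z : PreHilbert} (X : Z -> Prop) (z : Z) : Z :=
  epsilon (inhabits hzero) (fun p => is_proj X z p).

Definition coproj {Z : PreHilbert} (X : Z -> Prop) (z : Z) : Z :=
  hsub z (proj X z).

Definition closed_span {Z : PreHilbert} (S : Z -> Prop) (z : Z) : Prop :=
  forall Y : Z -> Prop, closed_subspace Y -> (forall s, S s -> Y s) -> Y z.

Definition subdiff {Z : PreHilbert} (f : Z -> R) (x xi : Z) : Prop :=
  forall y, f y >= f x + hinner xi (hsub y x).

Definition continuous_fun {Z : PreHilbert} (f : Z -> R) : Prop :=
  forall z eps, 0 < eps -> exists delta, 0 < delta /\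
    forall y, hnorm (hsub y z) < delta -> Rabs (f y - f z) < eps.

Definition convex_on {Z : PreHilbert} (X : Z -> Prop) (g : Z -> R) : Prop :=
  forall x y t, X x -> X y -> 0 <= t <= 1 ->
    g (hadd (hscal t x) (hscal (1 - t) y)) <= t * g x + (1 - t) * g y.

Definition convex {Z : PreHilbert} (f : Z -> R) : Prop := convex_on (fun _ => True) f.

Definition cont_linear_on {Z : PreHilbert} (X : Z -> Prop) (l : Z -> R) : Prop :=
  (forall x y, X x -> X y -> l (hadd x y) = l x + l y) /\
  (forall a x, X x -> l (hscal a x) = a * l x) /\
  (exists M, forall x, X x -> Rabs (l x) <= M * hnorm x).

Definition dir_coercive_on {Z : PreHilbert} (X : Z -> Prop) (g : Z -> R) : Prop :=
  forall x v, X x -> X v -> v <> hzero ->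
    forall M, exists T, forall t, T <= t -> M <= g (hadd x (hscal t v)).

Definition ess_dir_coercive_on {Z : PreHilbert} (X : Z -> Prop) (g : Z -> R) : Prop :=
  exists l, cont_linear_on X l /\ dir_coercive_on X (fun x => g x - l x).

Definition decomposition {Z : PreHilbert} (f : Z -> R)
    (X : Z -> Prop) (v : Z) (c : Z -> R) : Prop :=
  closed_subspace X /\ orth X v /\ convex_on X c /\ ess_dir_coercive_on X c /\
  forall z, f z = c (proj X z) + hinner v z.

(* Let X be the closed span of differences of subgradients of f. All subgradients then have
   the same component v orthogonal to X. Since subgradients exist on a dense set (proximal
   points) and f is continuous, f is affine with slope v along X^perp, so
   f z = f (P_X z) + <v, z>, and c := f restricted to X works.  For essential coercivity,
   separability gives a point l, a strictly positive convex combination of a dense sequence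
   of subgradients: if <xi, u> <= <l, u> for every subgradient xi then all the <xi, u> are
   equal, i.e. u is orthogonal to X.  Hence for 0 <> u in X some subgradient has
   <xi, u> > <l, u>, and the subgradient inequality makes f - <l, .> grow linearly along u.
   Uniqueness: in any decomposition (X', v', c'), f is affine with slope v' along X'^perp,
   which forces every subgradient to agree with v' there, so X is contained in X'; a
   nonzero direction of X' orthogonal to X would be a line along which c' - l is affine,
   contradicting directional coercivity. *)

From Stdlib Require Import Reals Lra Psatz Classical ClassicalEpsilon.
From Stdlib Require Cantor.
Open Scope R_scope.

Section InnerProduct.
Context {Z : PreHilbert}.
Implicit Types x y z : Z.

Lemma hinner_0l y : hinner hzero y = 0.
Proof.
  assert (H := hinner_addl Z hzero hzero y). rewrite hadd_0l in H. lra.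
Qed.

Lemma hinner_0r y : hinner y hzero = 0.
Proof. rewrite hinner_sym. apply hinner_0l. Qed.

Lemma hinner_addr x y z : hinner x (hadd y z) = hinner x y + hinner x z.
Proof. rewrite !(hinner_sym Z x). apply hinner_addl. Qed.

Lemma hinner_scalr a x y : hinner x (hscal a y) = a * hinner x y.
Proof. rewrite !(hinner_sym Z x). apply hinner_scall. Qed.

Lemma hinner_oppl x y : hinner (hopp x) y = - hinner x y.
Proof.
  assert (H := hinner_addl Z x (hopp x) y). rewrite hadd_oppr, hinner_0l in H. lra.
Qed.

Lemma hinner_oppr x y : hinner y (hopp x) = - hinner y x.
Proof. rewrite !(hinner_sym Z y). apply hinner_oppl. Qed.

Lemma hinner_subl x y z : hinner (hsub x y) z = hinner x z - hinner y z.
Proof. unfold hsub. rewrite hinner_addl, hinner_oppl. ring. Qed.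

Lemma hinner_subr x y z : hinner z (hsub x y) = hinner z x - hinner z y.
Proof. unfold hsub. rewrite hinner_addr, hinner_oppr. ring. Qed.

End InnerProduct.

Ltac hinner_simpl := repeat first
  [ rewrite hinner_addl | rewrite hinner_addr | rewrite hinner_scall | rewrite hinner_scalr
  | rewrite hinner_subl | rewrite hinner_subr | rewrite hinner_oppl | rewrite hinner_oppr
  | rewrite hinner_0l | rewrite hinner_0r ].
Ltac hinner_simpl_in H := repeat first
  [ rewrite hinner_addl in H | rewrite hinner_addr in H | rewrite hinner_scall in H
  | rewrite hinner_scalr in H | rewrite hinner_subl in H | rewrite hinner_subr in H
  | rewrite hinner_oppl in H | rewrite hinner_oppr in H | rewrite hinner_0l in H
  | rewrite hinner_0r in H ].

Section Norm.
Context {Z : PreHilbert}.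
Implicit Types x y z : Z.

Lemma hsub_eq0 x y : hsub x y = hzero -> x = y.
Proof.
  intro H. unfold hsub in H.
  assert (E : hadd (hadd x (hopp y)) y = x).
  { rewrite <- hadd_assoc, (hadd_comm Z (hopp y)), hadd_oppr, hadd_comm, hadd_0l.
    reflexivity. }
  rewrite H, hadd_0l in E. auto.
Qed.

(* Vector identities are proved by testing against every [w] and normalising with [hinner_simpl]. *)
Lemma hvec_ext x y : (forall w, hinner x w = hinner y w) -> x = y.
Proof. intro H. apply hsub_eq0, hinner_def. hinner_simpl. rewrite !H. ring. Qed.

Lemma hsub_diag x : hsub x x = hzero.
Proof. apply hvec_ext; intro; hinner_simpl; ring. Qed.

Lemma hnorm_ge0 x : 0 <= hnorm x.
Proof. apply sqrt_pos. Qed.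

Lemma hnorm_sqr x : hnorm x * hnorm x = hinner x x.
Proof. apply sqrt_sqrt, hinner_pos. Qed.

Lemma hnorm_0 : hnorm (@hzero Z) = 0.
Proof. unfold hnorm. rewrite hinner_0l. apply sqrt_0. Qed.

Lemma hnorm_lt_sqr x e : 0 < e -> (hnorm x < e <-> hinner x x < e * e).
Proof. intro He. rewrite <- hnorm_sqr. assert (H := hnorm_ge0 x). split; intro; nra. Qed.

Lemma Cauchy_Schwarz_sqr x y : hinner x y * hinner x y <= hinner x x * hinner y y.
Proof.
  destruct (Req_dec (hinner y y) 0) as [E|E].
  - apply hinner_def in E. subst. hinner_simpl. nra.
  - assert (Hy := hinner_pos Z y).
    set (t := hinner x y / hinner y y).
    assert (H := hinner_pos Z (hsub x (hscal t y))). hinner_simpl_in H.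
    rewrite (hinner_sym Z y x) in H.
    assert (Ht : t * hinner y y = hinner x y) by (unfold t; field; auto).
    assert (hinner x y * hinner x y = t * hinner x y * hinner y y) by (rewrite <- Ht; ring).
    nra.
Qed.

Lemma Cauchy_Schwarz x y : Rabs (hinner x y) <= hnorm x * hnorm y.
Proof.
  unfold hnorm. rewrite <- sqrt_mult by apply hinner_pos.
  rewrite <- sqrt_Rsqr_abs. apply sqrt_le_1_alt. apply Cauchy_Schwarz_sqr.
Qed.

Lemma hnorm_triang x y : hnorm (hadd x y) <= hnorm x + hnorm y.
Proof.
  assert (H1 := hnorm_ge0 x); assert (H2 := hnorm_ge0 y).
  assert (H3 := hnorm_ge0 (hadd x y)).
  enough (hnorm (hadd x y) * hnorm (hadd x y) <= (hnorm x + hnorm y) * (hnorm x + hnorm y))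
    by nra.
  rewrite hnorm_sqr. hinner_simpl. rewrite (hinner_sym Z y x).
  assert (H := Cauchy_Schwarz x y). assert (H' := Rle_abs (hinner x y)).
  assert (E1 := hnorm_sqr x); assert (E2 := hnorm_sqr y). nra.
Qed.

Lemma hnorm_scal a x : hnorm (hscal a x) = Rabs a * hnorm x.
Proof.
  apply Rsqr_inj; unfold Rsqr.
  - apply hnorm_ge0.
  - apply Rmult_le_pos; [apply Rabs_pos|apply hnorm_ge0].
  - rewrite hnorm_sqr. hinner_simpl.
    replace (Rabs a * hnorm x * (Rabs a * hnorm x))
      with ((Rabs a * Rabs a) * (hnorm x * hnorm x)) by ring.
    rewrite hnorm_sqr, <- Rabs_mult, Rabs_right by nra. ring.
Qed.

Lemma hdist_triang x y z : hnorm (hsub x z) <= hnorm (hsub x y) + hnorm (hsub y z).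
Proof.
  replace (hsub x z) with (hadd (hsub x y) (hsub y z))
    by (apply hvec_ext; intro; hinner_simpl; ring).
  apply hnorm_triang.
Qed.

Lemma hdist_sym x y : hnorm (hsub x y) = hnorm (hsub y x).
Proof. unfold hnorm. f_equal. hinner_simpl. rewrite (hinner_sym Z x y). ring. Qed.

Lemma hconverges_inner (u : nat -> Z) l v : hconverges u l ->
  forall eps, 0 < eps -> exists N, forall n, (N <= n)%nat ->
    Rabs (hinner (u n) v - hinner l v) < eps.
Proof.
  intros Hc eps He.
  assert (Hv := hnorm_ge0 v).
  destruct (Hc (eps / (hnorm v + 1))) as [N HN]; [apply Rdiv_lt_0_compat; lra|].
  exists N. intros n Hn. specialize (HN n Hn).
  replace (hinner (u n) v - hinner l v) with (hinner (hsub (u n) l) v) by (hinner_simpl; ring).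
  eapply Rle_lt_trans; [apply Cauchy_Schwarz|].
  assert (Hu := hnorm_ge0 (hsub (u n) l)).
  assert (eps / (hnorm v + 1) * (hnorm v + 1) = eps) by (field; lra).
  apply Rle_lt_trans with (eps / (hnorm v + 1) * hnorm v); [apply Rmult_le_compat_r|]; nra.
Qed.

End Norm.
Section Subspaces.
Context {Z : PreHilbert}.
Implicit Types (X : Z -> Prop) (x y z w : Z).

Lemma closed_subspace_sub X x y : closed_subspace X -> X x -> X y -> X (hsub x y).
Proof.
  intros (H0 & Ha & Hs & Hl) Hx Hy.
  replace (hsub x y) with (hadd x (hscal (-1) y))
    by (apply hvec_ext; intro; hinner_simpl; ring).
  auto.
Qed.

Lemma closed_subspace_hyperplane v : closed_subspace (fun y => hinner v y = 0).
Proof.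
  repeat split.
  - apply hinner_0r.
  - intros x y Hx Hy. rewrite hinner_addr, Hx, Hy. ring.
  - intros a x Hx. rewrite hinner_scalr, Hx. ring.
  - intros u l Hu Hc. destruct (Req_dec (hinner v l) 0) as [E|E]; auto.
    exfalso. destruct (hconverges_inner u l v Hc (Rabs (hinner v l))) as [N HN].
    { apply Rabs_pos_lt; auto. }
    specialize (HN N (le_n _)). rewrite (hinner_sym Z (u N)), Hu, (hinner_sym Z l) in HN.
    rewrite Rminus_0_l, Rabs_Ropp in HN. lra.
Qed.

Lemma closed_span_closed_subspace (S : Z -> Prop) : closed_subspace (closed_span S).
Proof.
  unfold closed_span. split; [|split; [|split]].
  - intros Y HY _. apply HY.
  - intros x y Hx Hy Y HY HS. apply HY; [apply Hx|apply Hy]; auto.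
  - intros a x Hx Y HY HS. apply HY, Hx; auto.
  - intros u l Hu Hc Y HY HS. apply (proj2 (proj2 (proj2 HY)) u l); auto.
    intro n. apply Hu; auto.
Qed.

Lemma closed_span_incl (S : Z -> Prop) s : S s -> closed_span S s.
Proof. intros Hs Y _ HS. auto. Qed.

Lemma orth_scal X a w : orth X w -> orth X (hscal a w).
Proof. intros H x Hx. rewrite hinner_scall, H; auto. ring. Qed.

Lemma orth_opp X w : orth X w -> orth X (hopp w).
Proof. intros H x Hx. rewrite hinner_oppl, H; auto. ring. Qed.

Lemma orth_sub X w w' : orth X w -> orth X w' -> orth X (hsub w w').
Proof. intros Ha Hb x Hx. rewrite hinner_subl, Ha, Hb; auto. ring. Qed.

End Subspaces.

Lemma inv_INR_small r : 0 < r -> exists N, forall n, (N <= n)%nat -> / (INR n + 1) < r.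
Proof.
  intro Hr. destruct (INR_unbounded (/ r)) as [N HN]. exists N. intros n Hn.
  apply le_INR in Hn. assert (Hp : 0 < INR n + 1) by (assert (H := pos_INR n); lra).
  apply Rmult_lt_reg_l with (INR n + 1); auto. rewrite Rinv_r by lra.
  assert (r * / r = 1) by (field; lra). nra.
Qed.

Lemma inf_approx {T : Type} (C : T -> Prop) (h : T -> R) (c0 : T) B :
  C c0 -> (forall y, C y -> B <= h y) ->
  exists m, (forall y, C y -> m <= h y) /\
    forall eps, 0 < eps -> exists y, C y /\ h y < m + eps.
Proof.
  intros Hc0 HB.
  set (E := fun r => exists y, C y /\ r = - h y).
  destruct (completeness E) as [M [HM1 HM2]].
  { exists (- B). intros r [y [Hy ->]]. specialize (HB y Hy). lra. }
  { exists (- h c0), c0. auto. }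
  exists (- M). split.
  - intros y Hy. enough (- h y <= M) by lra. apply HM1. exists y. auto.
  - intros eps He. apply NNPP. intro Hn.
    enough (M <= - (- M + eps)) by lra. apply HM2.
    intros r [y [Hy ->]]. apply Ropp_le_contravar, Rnot_lt_le. intro Hlt. apply Hn. eauto.
Qed.

Definition hmid {Z : PreHilbert} (a b : Z) : Z := hadd (hscal (1/2) a) (hscal (1 - 1/2) b).

(* The usual proof that a closest point exists: a quadratic gain at midpoints makes every
   minimising sequence Cauchy. *)
Lemma midpoint_uniformly_convex_min (Z : Hilbert) (C : Z -> Prop) (h : Z -> R) k c0 :
  0 < k -> C c0 ->
  (forall a b, C a -> C b -> C (hmid a b)) ->
  (forall u l, (forall n, C (u n)) -> hconverges u l -> C l) ->
  (exists B, forall y, C y -> B <= h y) ->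
  continuous_fun h ->
  (forall a b, C a -> C b ->
     h (hmid a b) <= (h a + h b) / 2 - k * hinner (hsub a b) (hsub a b)) ->
  exists p, C p /\ forall y, C y -> h p <= h y.
Proof.
  intros Hk Hc0 Hmid Hcl [B HB] Hcont Hsc.
  destruct (inf_approx C h c0 B Hc0 HB) as [m [Hlow Happ]].
  set (P := fun n y => C y /\ h y < m + / (INR n + 1)).
  set (u := fun n => epsilon (inhabits c0) (P n)).
  assert (Hu : forall n, P n (u n)).
  { intro n. apply epsilon_spec, Happ, Rinv_0_lt_compat. assert (H := pos_INR n); lra. }
  assert (Hcau : hCauchy u).
  { intros eps He. destruct (inv_INR_small (k * eps * eps)) as [N HN].
    { apply Rmult_lt_0_compat; [apply Rmult_lt_0_compat|]; lra. }
    exists N. intros a b Ha Hb. apply hnorm_lt_sqr; auto.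
    destruct (Hu a) as [Ca ha]. destruct (Hu b) as [Cb hb].
    specialize (HN a Ha) as Na. specialize (HN b Hb) as Nb.
    assert (L1 := Hlow _ (Hmid _ _ Ca Cb)). assert (L2 := Hsc _ _ Ca Cb).
    apply Rmult_lt_reg_l with k; auto. lra. }
  destruct (hcomplete Z u Hcau) as [p Hp].
  exists p. split; [apply (Hcl u p); auto; intro n; apply Hu|].
  assert (Hpm : h p <= m).
  { apply Rnot_lt_le. intro Hlt. set (eps := (h p - m) / 2).
    assert (He : 0 < eps) by (unfold eps; lra).
    destruct (Hcont p eps He) as [d [Hd Hdd]].
    destruct (Hp d Hd) as [N1 HN1]. destruct (inv_INR_small eps He) as [N2 HN2].
    set (n := Nat.max N1 N2).
    specialize (HN1 n (Nat.le_max_l _ _)). specialize (HN2 n (Nat.le_max_r _ _)).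
    specialize (Hdd _ HN1). destruct (Hu n) as [_ Hn].
    apply Rabs_def2 in Hdd. unfold eps in *. lra. }
  intros y Hy. specialize (Hlow y Hy). lra.
Qed.

Lemma hmid_sqdist {Z : PreHilbert} (z a b : Z) :
  hinner (hsub (hmid a b) z) (hsub (hmid a b) z) =
  (hinner (hsub a z) (hsub a z) + hinner (hsub b z) (hsub b z)) / 2
  - / 4 * hinner (hsub a b) (hsub a b).
Proof.
  unfold hmid. hinner_simpl.
  rewrite (hinner_sym Z b a), (hinner_sym Z z a), (hinner_sym Z z b). field.
Qed.

Lemma sqdist_continuous {Z : PreHilbert} (x : Z) :
  continuous_fun (fun y => hinner (hsub y x) (hsub y x)).
Proof.
  intros y0 eps He. set (n0 := hnorm (hsub y0 x)). assert (Hn0 := hnorm_ge0 (hsub y0 x)).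
  exists (Rmin 1 (eps / (1 + 2 * n0))). split.
  { apply Rmin_pos; [lra|apply Rdiv_lt_0_compat; unfold n0 in *; lra]. }
  intros y Hy.
  replace (hinner (hsub y x) (hsub y x) - hinner (hsub y0 x) (hsub y0 x))
    with (hinner (hsub y y0) (hadd (hsub y x) (hsub y0 x)))
    by (hinner_simpl; rewrite (hinner_sym Z y y0), (hinner_sym Z x y0), (hinner_sym Z x y); ring).
  eapply Rle_lt_trans; [apply Cauchy_Schwarz|].
  assert (T := hnorm_triang (hsub y x) (hsub y0 x)).
  assert (T2 := hdist_triang y y0 x).
  assert (H1 := Rmin_l 1 (eps / (1 + 2 * n0))). assert (H2 := Rmin_r 1 (eps / (1 + 2 * n0))).
  set (d := hnorm (hsub y y0)) in *. assert (Hd := hnorm_ge0 (hsub y y0)). fold d in Hd.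
  assert (Hs := hnorm_ge0 (hadd (hsub y x) (hsub y0 x))).
  fold n0 in T, T2.
  assert (d * (1 + 2 * n0) < eps).
  { assert (eps / (1 + 2 * n0) * (1 + 2 * n0) = eps) by (field; unfold n0 in *; lra).
    unfold n0 in *; nra. }
  nra.
Qed.

Lemma continuous_fun_add_scal {Z : PreHilbert} (f g : Z -> R) K :
  continuous_fun f -> continuous_fun g -> continuous_fun (fun y => f y + K * g y).
Proof.
  intros Hf Hg y0 eps He.
  destruct (Hf y0 (eps / 2)) as [d1 [Hd1 H1]]; [lra|].
  destruct (Hg y0 (eps / 2 / (Rabs K + 1))) as [d2 [Hd2 H2]].
  { apply Rdiv_lt_0_compat; [lra|]. assert (H := Rabs_pos K); lra. }
  exists (Rmin d1 d2). split; [apply Rmin_pos; auto|].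
  intros y Hy. specialize (H1 y (Rlt_le_trans _ _ _ Hy (Rmin_l _ _))).
  specialize (H2 y (Rlt_le_trans _ _ _ Hy (Rmin_r _ _))).
  replace (f y + K * g y - (f y0 + K * g y0)) with ((f y - f y0) + K * (g y - g y0)) by ring.
  eapply Rle_lt_trans; [apply Rabs_triang|]. rewrite Rabs_mult.
  assert (HK := Rabs_pos K). assert (H0 := Rabs_pos (g y - g y0)).
  assert (eps / 2 / (Rabs K + 1) * (Rabs K + 1) = eps / 2) by (field; lra).
  nra.
Qed.

Lemma linear_quadratic_nonneg a b : 0 <= b -> (forall t, 0 <= 2 * t * a + t * t * b) -> a = 0.
Proof.
  intros Hb H. specialize (H (- a / (b + 1))).
  assert (E : (2 * (- a / (b + 1)) * a + (- a / (b + 1)) * (- a / (b + 1)) * b)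
              * ((b + 1) * (b + 1)) = - (a * a) * (b + 2)) by (field; lra).
  assert (0 <= (2 * (- a / (b + 1)) * a + (- a / (b + 1)) * (- a / (b + 1)) * b)
               * ((b + 1) * (b + 1))) by (apply Rmult_le_pos; nra).
  nra.
Qed.

Section Projection.
Variable Z : Hilbert.
Variable X : Z -> Prop.
Hypothesis HX : closed_subspace X.

Lemma proj_exists z : exists p, is_proj X z p.
Proof.
  destruct HX as (H0 & Ha & Hs & Hl).
  destruct (midpoint_uniformly_convex_min Z X (fun y => hinner (hsub y z) (hsub y z)) (/4) hzero)
    as [p [Hp Hmin]]; auto.
  - lra.
  - intros a b Xa Xb. unfold hmid. auto.
  - exists 0. intros y _. apply hinner_pos.
  - apply sqdist_continuous.
  - intros a b _ _. rewrite hmid_sqdist. lra.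
  - exists p. split; auto. intros x Hx.
    assert (Ht : forall t, 0 <= 2 * t * hinner (hsub p z) x + t * t * hinner x x).
    { intro t. specialize (Hmin (hadd p (hscal t x)) (Ha _ _ Hp (Hs t x Hx))).
      hinner_simpl_in Hmin.
      rewrite (hinner_sym Z x p), (hinner_sym Z x z), (hinner_sym Z z p) in Hmin.
      hinner_simpl. lra. }
    apply linear_quadratic_nonneg in Ht; [|apply hinner_pos].
    hinner_simpl. hinner_simpl_in Ht. lra.
Qed.

Lemma proj_spec z : is_proj X z (proj X z).
Proof. unfold proj. apply epsilon_spec, proj_exists. Qed.

Lemma proj_unique z p : is_proj X z p -> proj X z = p.
Proof.
  intros [Xq Oq]. destruct (proj_spec z) as [Xp Op].
  apply hsub_eq0, hinner_def.
  assert (Xd := closed_subspace_sub X _ _ HX Xp Xq).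
  specialize (Op _ Xd). specialize (Oq _ Xd).
  hinner_simpl. hinner_simpl_in Op. hinner_simpl_in Oq. lra.
Qed.

Lemma proj_id x : X x -> proj X x = x.
Proof.
  intro Hx. apply proj_unique. split; auto.
  intros y Hy. rewrite hsub_diag. apply hinner_0l.
Qed.

Lemma proj_add_orth z w : orth X w -> proj X (hadd z w) = proj X z.
Proof.
  intro Hw. apply proj_unique. destruct (proj_spec z) as [Xp Op].
  split; auto. intros x Hx. specialize (Op x Hx). specialize (Hw x Hx).
  hinner_simpl. hinner_simpl_in Op. lra.
Qed.

Lemma orth_coproj z : orth X (coproj X z).
Proof. apply proj_spec. Qed.

Lemma hinner_coproj_orth z w : orth X w -> hinner (coproj X z) w = hinner z w.
Proof.
  intro Hw. unfold coproj. rewrite hinner_subl, (hinner_sym Z (proj X z)), (Hw _ (proj1 (proj_spec z))).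
  ring.
Qed.

Lemma orth_orth_in y : (forall w, orth X w -> hinner y w = 0) -> X y.
Proof.
  intro H. destruct (proj_spec y) as [Xp Op].
  replace y with (proj X y); auto.
  symmetry. apply hsub_eq0, hinner_def. specialize (H _ Op). specialize (Op _ Xp).
  hinner_simpl. hinner_simpl_in H. hinner_simpl_in Op.
  rewrite (hinner_sym Z (proj X y) y). lra.
Qed.

End Projection.
Lemma convex_continuous_lower_bound {Z : PreHilbert} (f : Z -> R) x :
  continuous_fun f -> convex f ->
  exists d, 0 < d /\ forall y, f x - 1 - 2 * hnorm (hsub y x) / d <= f y.
Proof.
  intros Hc Hv. destruct (Hc x 1 Rlt_0_1) as [d [Hd Hdd]]. exists d. split; auto. intro y.
  set (r := hnorm (hsub y x)). assert (Hr := hnorm_ge0 (hsub y x)). fold r in Hr.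
  destruct (Rlt_le_dec r d) as [L|L].
  - specialize (Hdd y L). apply Rabs_def2 in Hdd.
    assert (0 <= 2 * r / d) by (apply Rmult_le_pos; [lra|left; apply Rinv_0_lt_compat; lra]).
    lra.
  - (* compare with the point at distance d/2 on the segment from x to y *)
    set (t := d / (2 * r)).
    assert (Ht0 : 0 < t) by (unfold t; apply Rdiv_lt_0_compat; lra).
    assert (Ht1 : t <= 1).
    { unfold t. apply Rmult_le_reg_r with (2 * r); [lra|]. field_simplify; lra. }
    set (yt := hadd (hscal t y) (hscal (1 - t) x)).
    assert (E : hsub yt x = hscal t (hsub y x))
      by (apply hvec_ext; intro; unfold yt; hinner_simpl; ring).
    assert (Hn : hnorm (hsub yt x) < d).
    { rewrite E, hnorm_scal, Rabs_right by lra. fold r. unfold t.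
      replace (d / (2 * r) * r) with (d / 2) by (field; lra). lra. }
    specialize (Hdd _ Hn). apply Rabs_def2 in Hdd.
    assert (Cv := Hv y x t I I (conj (Rlt_le _ _ Ht0) Ht1)). fold yt in Cv.
    assert (E2 : 2 * r / d * t = 1) by (unfold t; field; lra).
    assert (0 < 2 * r / d) by (apply Rdiv_lt_0_compat; lra).
    nra.
Qed.

Lemma linear_quadratic_nonneg_near0 A B :
  (forall t, 0 < t <= 1 -> 0 <= t * A + t * t * B) -> 0 <= A.
Proof.
  intro H. apply Rnot_lt_le. intro HA.
  assert (HB := Rabs_pos B).
  set (t := Rmin 1 (- A / (2 * (Rabs B + 1)))).
  assert (Ht0 : 0 < t) by (apply Rmin_pos; [lra|apply Rdiv_lt_0_compat; lra]).
  assert (Ht1 := Rmin_l 1 (- A / (2 * (Rabs B + 1)))).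
  assert (Ht2 := Rmin_r 1 (- A / (2 * (Rabs B + 1)))).
  fold t in Ht1, Ht2.
  specialize (H t (conj Ht0 Ht1)).
  assert (0 <= A + t * B) by (apply Rmult_le_reg_l with t; auto; lra).
  assert (t * B <= t * Rabs B) by (apply Rmult_le_compat_l; [lra|apply Rle_abs]).
  assert (t * (2 * (Rabs B + 1)) <= - A).
  { apply Rmult_le_reg_r with (/ (2 * (Rabs B + 1))); [apply Rinv_0_lt_compat; lra|].
    rewrite Rmult_assoc, Rinv_r by lra. lra. }
  nra.
Qed.

(* The first-order condition for the proximal problem [min_y f y + K |y - x|^2]. *)
Lemma subdiff_of_prox {Z : PreHilbert} (f : Z -> R) K x p : convex f ->
  (forall y, f p + K * hinner (hsub p x) (hsub p x) <= f y + K * hinner (hsub y x) (hsub y x)) ->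
  subdiff f p (hscal (2 * K) (hsub x p)).
Proof.
  intros Hv Hmin y. apply Rle_ge.
  enough (0 <= f y - f p - hinner (hscal (2 * K) (hsub x p)) (hsub y p)) by lra.
  apply (linear_quadratic_nonneg_near0 _ (K * hinner (hsub y p) (hsub y p))).
  intros t Ht. set (pt := hadd (hscal t y) (hscal (1 - t) p)).
  assert (Cv := Hv y p t I I ltac:(lra)). fold pt in Cv.
  specialize (Hmin pt).
  assert (E : hinner (hsub pt x) (hsub pt x) - hinner (hsub p x) (hsub p x)
              = 2 * t * hinner (hsub p x) (hsub y p) + t * t * hinner (hsub y p) (hsub y p)).
  { unfold pt. hinner_simpl.
    rewrite (hinner_sym Z y p), (hinner_sym Z x p), (hinner_sym Z x y). ring. }
  assert (E2 : hinner (hscal (2 * K) (hsub x p)) (hsub y p)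
               = - 2 * K * hinner (hsub p x) (hsub y p)) by (hinner_simpl; ring).
  rewrite E2. nra.
Qed.

(* The proximal point of [x] for a large enough penalty [K] lies within [eps] of [x]. *)
Lemma subdiff_dense (Z : Hilbert) (f : Z -> R) : continuous_fun f -> convex f ->
  forall x eps, 0 < eps -> exists q xi, hnorm (hsub q x) < eps /\ subdiff f q xi.
Proof.
  intros Hc Hv x eps He.
  destruct (convex_continuous_lower_bound f x Hc Hv) as [d [Hd Hlb]].
  set (K := (/ eps + 2 / d) / eps + 1).
  assert (HK0 : 0 < (/ eps + 2 / d) / eps).
  { apply Rdiv_lt_0_compat; auto. assert (0 < / eps) by (apply Rinv_0_lt_compat; lra).
    assert (0 < 2 / d) by (apply Rdiv_lt_0_compat; lra). lra. }
  assert (HK : 0 < K) by (unfold K; lra).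
  set (h := fun y => f y + K * hinner (hsub y x) (hsub y x)).
  destruct (midpoint_uniformly_convex_min Z (fun _ => True) h (K / 4) x) as [p [_ Hmin]]; auto.
  - lra.
  - exists (f x - 1 - / (K * d * d)). intros y _. unfold h.
    specialize (Hlb y). set (r := hnorm (hsub y x)) in *.
    rewrite <- hnorm_sqr. fold r.
    assert (K * r * r - 2 * r / d + / (K * d * d) = K * ((r - / (K * d)) * (r - / (K * d))))
      by (field; lra).
    assert (0 <= K * ((r - / (K * d)) * (r - / (K * d))))
      by (apply Rmult_le_pos; [lra|apply Rle_0_sqr]).
    lra.
  - apply continuous_fun_add_scal; auto. apply sqdist_continuous.
  - intros a b _ _. unfold h. rewrite hmid_sqdist.
    assert (Cv := Hv a b (1/2) I I ltac:(lra)). unfold hmid. lra.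
  - exists p, (hscal (2 * K) (hsub x p)). split.
    + specialize (Hmin x I). unfold h in Hmin. rewrite hsub_diag, hinner_0l in Hmin.
      specialize (Hlb p). set (r := hnorm (hsub p x)) in *.
      rewrite <- hnorm_sqr in Hmin. fold r in Hmin.
      assert (Hr := hnorm_ge0 (hsub p x)). fold r in Hr.
      apply Rnot_le_lt. intro Hre.
      assert (1 <= r / eps) by (apply Rmult_le_reg_r with eps; auto; field_simplify; lra).
      assert (K * r * r <= r * (/ eps + 2 / d)).
      { replace (r * (/ eps + 2 / d)) with (r / eps + 2 * r / d) by (field; lra). lra. }
      assert (K * r <= / eps + 2 / d) by (apply Rmult_le_reg_l with r; nra).
      assert (K * eps <= K * r) by (apply Rmult_le_compat_l; lra).
      assert (K * eps = / eps + 2 / d + eps) by (unfold K; field; lra).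
      lra.
    + apply subdiff_of_prox; auto. intro y. apply (Hmin y I).
Qed.
Fixpoint psum {Z : PreHilbert} (u : nat -> Z) (n : nat) : Z :=
  match n with O => hzero | S k => hadd (psum u k) (u k) end.

Fixpoint sumR (a : nat -> R) (n : nat) : R :=
  match n with O => 0 | S k => sumR a k + a k end.

Lemma half_pow_pos n : 0 < (/ 2) ^ n.
Proof. apply pow_lt. lra. Qed.

Lemma half_pow_small eps : 0 < eps -> exists N, forall n, (N <= n)%nat -> (/ 2) ^ n < eps.
Proof.
  intro He. destruct (pow_lt_1_zero (/ 2) ltac:(rewrite Rabs_right; lra) eps He) as [N HN].
  exists N. intros n Hn. specialize (HN n Hn).
  rewrite Rabs_right in HN by (left; apply half_pow_pos). auto.
Qed.

Lemma sumR_ge_term (a : nat -> R) k N : (forall n, 0 <= a n) -> (k < N)%nat -> a k <= sumR a N.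
Proof.
  intros Ha HkN. induction N as [|N IH]; [lia|]. simpl.
  assert (0 <= sumR a N) by (clear - Ha; induction N; simpl; [lra|specialize (Ha N); lra]).
  destruct (Nat.eq_dec k N) as [->|Hne]; [lra|].
  assert (a k <= sumR a N) by (apply IH; lia). specialize (Ha N). lra.
Qed.

Lemma hseries_converges (Z : Hilbert) (u : nat -> Z) C : 0 <= C ->
  (forall n, hnorm (u n) <= C * (/ 2) ^ n) -> exists l, hconverges (psum u) l.
Proof.
  intros HC Hu.
  assert (Tail : forall n d, hnorm (hsub (psum u (n + d)) (psum u n))
                             <= 2 * C * ((/ 2) ^ n - (/ 2) ^ (n + d))).
  { intros n d. induction d as [|d IH].
    - rewrite Nat.add_0_r, hsub_diag, hnorm_0. lra.
    - rewrite Nat.add_succ_r. simpl psum.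
      replace (hsub (hadd (psum u (n + d)) (u (n + d)%nat)) (psum u n))
        with (hadd (hsub (psum u (n + d)) (psum u n)) (u (n + d)%nat))
        by (apply hvec_ext; intro; hinner_simpl; ring).
      eapply Rle_trans; [apply hnorm_triang|]. specialize (Hu (n + d)%nat). simpl pow. lra. }
  apply hcomplete. intros eps He.
  destruct (half_pow_small (eps / (2 * C + 1))) as [N HN]; [apply Rdiv_lt_0_compat; lra|].
  exists N.
  assert (G : forall n d, (N <= n)%nat -> hnorm (hsub (psum u (n + d)) (psum u n)) < eps).
  { intros n d Hn. specialize (HN n Hn).
    eapply Rle_lt_trans; [apply Tail|].
    assert (0 < (/ 2) ^ (n + d)) by apply half_pow_pos.
    assert (eps / (2 * C + 1) * (2 * C + 1) = eps) by (field; lra).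
    assert (2 * C * (/ 2) ^ n <= (2 * C + 1) * (/ 2) ^ n)
      by (assert (Hq := half_pow_pos n); nra).
    nra. }
  intros m n Hm Hn. destruct (Nat.le_ge_cases n m) as [L|L].
  - replace m with (n + (m - n))%nat by lia. apply G; auto.
  - rewrite hdist_sym. replace n with (m + (n - m))%nat by lia. apply G; auto.
Qed.

Lemma positive_combination_inner_eq {Z : PreHilbert} (s : nat -> Z) (x0 : Z) (a : nat -> R) l v :
  (forall n, 0 < a n <= (/ 2) ^ S n) ->
  hconverges (psum (fun n => hadd (hscal (a n) (s n)) (hscal ((/ 2) ^ S n - a n) x0))) l ->
  (forall n, hinner (s n) v <= hinner l v) -> hinner x0 v <= hinner l v ->
  forall n, hinner (s n) v = hinner l v.
Proof.
  intros Ha Hl Hs Hx0.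
  set (u := fun n => hadd (hscal (a n) (s n)) (hscal ((/ 2) ^ S n - a n) x0)) in Hl.
  set (L := hinner l v) in *.
  set (term := fun n => a n * (L - hinner (s n) v) + ((/ 2) ^ S n - a n) * (L - hinner x0 v)).
  assert (Hterm : forall n, 0 <= term n).
  { intro n. specialize (Ha n). specialize (Hs n).
    apply Rplus_le_le_0_compat; apply Rmult_le_pos; lra. }
  assert (Hid : forall N, L * (1 - (/ 2) ^ N) - hinner (psum u N) v = sumR term N).
  { induction N as [|N IH].
    - simpl. rewrite hinner_0l. ring.
    - simpl sumR. rewrite <- IH. simpl psum. unfold u, term. hinner_simpl. simpl pow. lra. }
  intro k. apply NNPP. intro Hne.
  assert (Hpos : 0 < term k).
  { specialize (Ha k). specialize (Hs k).
    assert (0 < a k * (L - hinner (s k) v)) by (apply Rmult_lt_0_compat; lra).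
    assert (0 <= ((/ 2) ^ S k - a k) * (L - hinner x0 v)) by (apply Rmult_le_pos; lra).
    unfold term. lra. }
  assert (HL := Rabs_pos L).
  destruct (hconverges_inner (psum u) l v Hl (term k / 2)) as [N1 HN1]; [lra|].
  destruct (half_pow_small (term k / 2 / (Rabs L + 1))) as [N2 HN2].
  { apply Rdiv_lt_0_compat; lra. }
  set (N := Nat.max (S k) (Nat.max N1 N2)).
  specialize (HN1 N ltac:(unfold N; lia)). specialize (HN2 N ltac:(unfold N; lia)).
  assert (G := sumR_ge_term term k N Hterm ltac:(unfold N; lia)).
  rewrite <- Hid in G. apply Rabs_def2 in HN1. fold L in HN1.
  assert (Hq := half_pow_pos N).
  assert (Rabs L * (/ 2) ^ N < term k / 2).
  { assert (term k / 2 / (Rabs L + 1) * (Rabs L + 1) = term k / 2) by (field; lra). nra. }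
  assert (- Rabs L <= L) by (assert (HmL := Rle_abs (- L)); rewrite Rabs_Ropp in HmL; lra).
  nra.
Qed.

Lemma separable_dense_seq (Z : Hilbert) (A : Z -> Prop) x0 : separable Z -> A x0 ->
  exists s : nat -> Z, (forall n, A (s n)) /\
    forall xi eps, A xi -> 0 < eps -> exists n, hnorm (hsub (s n) xi) < eps.
Proof.
  intros [d Hd] Sx0.
  (* [s (n, k)] is a point of [A] within [1/(k+1)] of [d n], when there is one. *)
  set (near := fun n k y => hnorm (hsub y (d n)) < / (INR k + 1)).
  set (P := fun n k y => A y /\ ((exists y', A y' /\ near n k y') -> near n k y)).
  assert (HP : forall n k, P n k (epsilon (inhabits x0) (P n k))).
  { intros n k. apply epsilon_spec.
    destruct (classic (exists y', A y' /\ near n k y')) as [[y' [H1 H2]]|Hn].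
    - exists y'. split; auto.
    - exists x0. split; auto. intro; contradiction. }
  set (s := fun m => let p := Cantor.of_nat m in epsilon (inhabits x0) (P (fst p) (snd p))).
  exists s. split; [intro m; apply HP|].
  intros xi eps Sxi He.
  destruct (inv_INR_small (eps / 2)) as [k Hk]; [lra|]. specialize (Hk k (le_n _)).
  assert (Hkp : 0 < / (INR k + 1)) by (apply Rinv_0_lt_compat; assert (H := pos_INR k); lra).
  destruct (Hd xi (/ (INR k + 1)) Hkp) as [n Hn].
  exists (Cantor.to_nat (n, k)). unfold s. rewrite Cantor.cancel_of_to. simpl.
  assert (Hc : near n k (epsilon (inhabits x0) (P n k))).
  { apply HP. exists xi. split; auto. unfold near. rewrite hdist_sym. auto. }
  eapply Rle_lt_trans; [apply (hdist_triang _ (d n))|]. unfold near in Hc. lra.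
Qed.

(* [l] is a point of the "relative interior" of the closed convex hull of [A]: it is the sum
   of the series [2^-(n+1) ((1 - t_n) x0 + t_n s_n)] over a dense sequence [s] of [A], with
   [t_n > 0] small enough for the series to converge. *)
Lemma separable_relative_interior (Z : Hilbert) (A : Z -> Prop) x0 : separable Z -> A x0 ->
  exists l, forall v, (forall xi, A xi -> hinner xi v <= hinner l v) ->
    forall xi, A xi -> hinner xi v = hinner l v.
Proof.
  intros Hsep Sx0.
  destruct (separable_dense_seq Z A x0 Hsep Sx0) as [s [Ss Hds]].
  set (c := fun n => (/ 2) ^ S n).
  set (a := fun n => c n / (1 + hnorm (s n))).
  assert (Hc : forall n, 0 < c n) by (intro; apply half_pow_pos).
  assert (Ha : forall n, 0 < a n <= c n /\ a n * hnorm (s n) <= c n).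
  { intro n. assert (Hs := hnorm_ge0 (s n)). specialize (Hc n).
    assert (E : a n * (1 + hnorm (s n)) = c n) by (unfold a; field; lra).
    assert (0 < a n) by (unfold a; apply Rdiv_lt_0_compat; lra). nra. }
  destruct (hseries_converges Z (fun n => hadd (hscal (a n) (s n)) (hscal (c n - a n) x0))
              ((1 + hnorm x0) / 2)) as [l Hl].
  { assert (H := hnorm_ge0 x0). lra. }
  { intro n. eapply Rle_trans; [apply hnorm_triang|]. rewrite !hnorm_scal.
    destruct (Ha n) as ((H1 & H2) & H3).
    rewrite (Rabs_right (a n)), (Rabs_right (c n - a n)) by lra.
    assert (Hx := hnorm_ge0 x0).
    assert ((c n - a n) * hnorm x0 <= c n * hnorm x0) by nra.
    assert (Ec : c n = / 2 * (/ 2) ^ n) by reflexivity. rewrite Ec in *. lra. }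
  exists l. intros v Hv.
  assert (Hsl : forall n, hinner (s n) v = hinner l v).
  { apply (positive_combination_inner_eq s x0 a); auto. intro n. apply Ha. }
  intros xi Sxi. apply NNPP. intro Hne.
  set (g := Rabs (hinner xi v - hinner l v)).
  assert (Hg : 0 < g) by (apply Rabs_pos_lt; lra).
  assert (Hvn := hnorm_ge0 v).
  destruct (Hds xi (g / (hnorm v + 1)) Sxi) as [n Hn]; [apply Rdiv_lt_0_compat; lra|].
  assert (E : hinner xi v - hinner l v = - hinner (hsub (s n) xi) v)
    by (hinner_simpl; rewrite Hsl; ring).
  assert (B := Cauchy_Schwarz (hsub (s n) xi) v). rewrite <- Rabs_Ropp, <- E in B. fold g in B.
  assert (Hs := hnorm_ge0 (hsub (s n) xi)).
  assert (g / (hnorm v + 1) * (hnorm v + 1) = g) by (field; lra).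
  nra.
Qed.
Lemma dir_coercive_not_affine {Z : PreHilbert} (Y : Z -> Prop) (g : Z -> R) x u a k :
  closed_subspace Y -> dir_coercive_on Y g -> Y x -> Y u -> u <> hzero ->
  ~ (forall t, g (hadd x (hscal t u)) = a + t * k).
Proof.
  intros HY Hg Yx Yu Hu Hline.
  assert (Yu' : Y (hopp u)).
  { replace (hopp u) with (hscal (-1) u) by (apply hvec_ext; intro; hinner_simpl; ring).
    apply HY, Yu. }
  assert (Hu' : hopp u <> hzero).
  { intro E. apply Hu, hvec_ext. intro w.
    assert (H := hinner_oppl u w). rewrite E, hinner_0l in H. rewrite hinner_0l. lra. }
  destruct (Hg x u Yx Yu Hu (a + 1)) as [T1 HT1].
  destruct (Hg x (hopp u) Yx Yu' Hu' (a + 1)) as [T2 HT2].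
  set (t := Rmax T1 T2).
  specialize (HT1 t (Rmax_l _ _)). specialize (HT2 t (Rmax_r _ _)).
  replace (hscal t (hopp u)) with (hscal (- t) u) in HT2
    by (apply hvec_ext; intro; hinner_simpl; ring).
  rewrite Hline in HT1, HT2. lra.
Qed.

Lemma subdiff_linear_growth {Z : PreHilbert} (f : Z -> R) z xi l x u :
  subdiff f z xi -> hinner l u < hinner xi u ->
  forall M, exists T, forall t, T <= t -> M <= f (hadd x (hscal t u)) - hinner l (hadd x (hscal t u)).
Proof.
  intros Hz Hlt M.
  set (a := hinner xi u - hinner l u).
  set (C := f z + hinner xi (hsub x z) - hinner l x).
  assert (Ha : 0 < a) by (unfold a; lra).
  exists ((M - C) / a). intros t Ht.
  assert (M - C <= t * a).
  { apply Rmult_le_reg_r with (/ a); [apply Rinv_0_lt_compat; auto|].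
    replace (t * a * / a) with t by (field; lra). auto. }
  specialize (Hz (hadd x (hscal t u))).
  replace (hinner xi (hsub (hadd x (hscal t u)) z)) with (hinner xi (hsub x z) + t * hinner xi u)
    in Hz by (hinner_simpl; ring).
  rewrite hinner_addr, hinner_scalr. unfold a, C in *. lra.
Qed.

Definition subgrad_diffs {Z : PreHilbert} (f : Z -> R) (d : Z) : Prop :=
  exists u w z1 y1, subdiff f z1 u /\ subdiff f y1 w /\ d = hsub u w.

Definition subgrad_span {Z : PreHilbert} (f : Z -> R) : Z -> Prop :=
  closed_span (subgrad_diffs f).

Section SubgradientSpan.
Variable Z : Hilbert.
Variable f : Z -> R.
Local Notation Xf := (subgrad_span f).

Lemma subgrad_span_closed : closed_subspace Xf.
Proof. apply closed_span_closed_subspace. Qed.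

Lemma subgrad_sub_in_span z y xi eta : subdiff f z xi -> subdiff f y eta -> Xf (hsub xi eta).
Proof. intros Hxi Heta. apply closed_span_incl. exists xi, eta, z, y. auto. Qed.

Lemma subgrad_inner_orth z y xi eta w :
  subdiff f z xi -> subdiff f y eta -> orth Xf w -> hinner xi w = hinner eta w.
Proof.
  intros Hxi Heta Hw. assert (H := Hw _ (subgrad_sub_in_span z y xi eta Hxi Heta)).
  hinner_simpl_in H. rewrite (hinner_sym Z w xi), (hinner_sym Z w eta) in H. lra.
Qed.

Lemma subgrad_coproj_eq z y xi eta :
  subdiff f z xi -> subdiff f y eta -> coproj Xf xi = coproj Xf eta.
Proof.
  intros Hxi Heta. apply hsub_eq0, hinner_def.
  set (q := hsub (coproj Xf xi) (coproj Xf eta)).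
  assert (Oq : orth Xf q)
    by (apply orth_sub; apply orth_coproj, subgrad_span_closed).
  apply Oq.
  replace q with (hsub (hsub xi eta) (hsub (proj Xf xi) (proj Xf eta)))
    by (apply hvec_ext; intro; unfold q, coproj; hinner_simpl; ring).
  apply closed_subspace_sub; [apply subgrad_span_closed|eapply subgrad_sub_in_span; eauto|].
  apply closed_subspace_sub; try apply subgrad_span_closed; apply proj_spec, subgrad_span_closed.
Qed.

Lemma subgrad_inner_const_orth u a :
  (forall z xi, subdiff f z xi -> hinner xi u = a) -> orth Xf u.
Proof.
  intros Hc x Hx. apply (Hx (fun y => hinner u y = 0)); [apply closed_subspace_hyperplane|].
  intros d [xi [eta [z1 [y1 [Hxi [Heta ->]]]]]].
  rewrite hinner_subr, (hinner_sym Z u xi), (hinner_sym Z u eta), (Hc _ _ Hxi), (Hc _ _ Heta).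
  ring.
Qed.

Hypothesis Hcont : continuous_fun f.
Hypothesis Hconv : convex f.

Lemma subdiff_exists : exists z xi, subdiff f z xi.
Proof.
  destruct (subdiff_dense Z f Hcont Hconv hzero 1 Rlt_0_1) as [z [xi [_ H]]]. eauto.
Qed.

(* Subgradients exist arbitrarily close to [y] and [y + w], and all of them have the
   same inner product with [w]. *)
Lemma add_orth_ge z0 xi0 y w : subdiff f z0 xi0 -> orth Xf w ->
  f y + hinner xi0 w <= f (hadd y w).
Proof.
  intros Hxi0 Hw. apply Rnot_lt_le. intro Hlt.
  set (g := f y + hinner xi0 w - f (hadd y w)). assert (Hg : 0 < g / 3) by (unfold g; lra).
  destruct (Hcont y _ Hg) as [d1 [Hd1 H1]].
  destruct (Hcont (hadd y w) _ Hg) as [d2 [Hd2 H2]].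
  destruct (subdiff_dense Z f Hcont Hconv y (Rmin d1 d2) (Rmin_pos _ _ Hd1 Hd2))
    as [q [xi [Hq Hs]]].
  specialize (H1 q (Rlt_le_trans _ _ _ Hq (Rmin_l _ _))).
  specialize (H2 (hadd q w)).
  replace (hsub (hadd q w) (hadd y w)) with (hsub q y) in H2
    by (apply hvec_ext; intro; hinner_simpl; ring).
  specialize (H2 (Rlt_le_trans _ _ _ Hq (Rmin_r _ _))).
  assert (Hs2 := Hs (hadd q w)).
  replace (hsub (hadd q w) q) with w in Hs2 by (apply hvec_ext; intro; hinner_simpl; ring).
  rewrite (subgrad_inner_orth q z0 xi xi0 w Hs Hxi0 Hw) in Hs2.
  apply Rabs_def2 in H1. apply Rabs_def2 in H2. unfold g in *. lra.
Qed.

Lemma add_orth z0 xi0 y w : subdiff f z0 xi0 -> orth Xf w ->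
  f (hadd y w) = f y + hinner xi0 w.
Proof.
  intros Hxi0 Hw. apply Rle_antisym; [|apply (add_orth_ge z0); auto].
  assert (H := add_orth_ge z0 xi0 (hadd y w) (hopp w) Hxi0 (orth_opp Xf w Hw)).
  replace (hadd (hadd y w) (hopp w)) with y in H by (apply hvec_ext; intro; hinner_simpl; ring).
  rewrite hinner_oppr in H. lra.
Qed.

Lemma f_proj_decomposition z0 xi0 z : subdiff f z0 xi0 ->
  f z = f (proj Xf z) + hinner (coproj Xf xi0) z.
Proof.
  intro Hxi0. destruct (proj_spec Z Xf subgrad_span_closed z) as [Pz Oz].
  replace z with (hadd (proj Xf z) (hsub z (proj Xf z))) at 1
    by (apply hvec_ext; intro; hinner_simpl; ring).
  rewrite (add_orth z0 xi0 _ _ Hxi0 Oz),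
    <- (hinner_coproj_orth Z Xf subgrad_span_closed xi0 _ Oz), hinner_subr,
    (orth_coproj Z Xf subgrad_span_closed xi0 _ Pz).
  ring.
Qed.

(* If [f - <l, .>] stays bounded along [u], no subgradient has [<xi, u> > <l, u>], so by the
   choice of [l] all the [<xi, u>] are equal and [u] is orthogonal to [Xf]. *)
Lemma subgrad_span_ess_coercive : separable Z -> ess_dir_coercive_on Xf f.
Proof.
  intro Hsep. destruct subdiff_exists as [z0 [xi0 Hxi0]].
  destruct (separable_relative_interior Z (fun xi => exists z, subdiff f z xi) xi0 Hsep)
    as [l Hl]; [eauto|].
  exists (fun x => hinner l x). split.
  - split; [|split].
    + intros x y _ _. apply hinner_addr.
    + intros a x _. apply hinner_scalr.
    + exists (hnorm l). intros x _. apply Cauchy_Schwarz.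
  - intros x u Xx Xu Hu0 M. apply NNPP. intro Hn. apply Hu0, hinner_def.
    assert (Hle : forall xi, (exists z, subdiff f z xi) -> hinner xi u <= hinner l u).
    { intros xi [z Hz]. apply Rnot_lt_le. intro Hlt. apply Hn.
      apply (subdiff_linear_growth f z xi); auto. }
    apply (subgrad_inner_const_orth u (hinner l u)); auto.
    intros z xi Hz. apply (Hl u Hle). eauto.
Qed.

Lemma subgrad_decomposition z0 xi0 : separable Z -> subdiff f z0 xi0 ->
  decomposition f Xf (coproj Xf xi0) f.
Proof.
  intros Hsep Hxi0. split; [apply subgrad_span_closed|split; [|split; [|split]]].
  - apply orth_coproj, subgrad_span_closed.
  - intros x y t _ _ Ht. apply Hconv; auto.
  - apply subgrad_span_ess_coercive, Hsep.
  - intro z. apply (f_proj_decomposition z0), Hxi0.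
Qed.

Section Uniqueness.
Variables (X : Z -> Prop) (v : Z) (c : Z -> R).
Hypothesis Hdec : decomposition f X v c.

Lemma decomposition_subgrad_inner z xi w : subdiff f z xi -> orth X w -> hinner xi w = hinner v w.
Proof.
  destruct Hdec as (HX & _ & _ & _ & Hf). intros Hz Hw.
  (* [f] is affine with slope [<v, w>] along the line [z + t w], and [xi] supports it *)
  assert (G : forall t, f z + t * hinner v w >= f z + t * hinner xi w).
  { intro t. specialize (Hz (hadd z (hscal t w))).
    replace (hsub (hadd z (hscal t w)) z) with (hscal t w) in Hz
      by (apply hvec_ext; intro; hinner_simpl; ring).
    rewrite Hf, (Hf z), proj_add_orth, hinner_addr, !hinner_scalr in Hz;
      auto using orth_scal.
    lra. }
  assert (G1 := G 1). assert (G2 := G (-1)). lra.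
Qed.

Lemma subgrad_span_incl_decomposition x : Xf x -> X x.
Proof.
  destruct Hdec as (HX & _). intro Hx. apply Hx; auto.
  intros d [xi [eta [z1 [y1 [Hxi [Heta ->]]]]]].
  apply orth_orth_in; auto. intros w Hw.
  rewrite hinner_subl, (decomposition_subgrad_inner z1 xi w Hxi Hw),
    (decomposition_subgrad_inner y1 eta w Heta Hw).
  ring.
Qed.

(* A direction of [X] orthogonal to [Xf] would be a line along which [c] is affine. *)
Lemma decomposition_incl_subgrad_span x : X x -> Xf x.
Proof.
  destruct Hdec as (HX & _ & _ & [l [[Ladd [Lscal _]] Lcoer]] & Hf). intro Hx.
  destruct subdiff_exists as [z0 [xi0 Hxi0]].
  destruct (proj_spec Z Xf subgrad_span_closed x) as [Px Ox].
  set (u := hsub x (proj Xf x)) in Ox.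
  assert (Xu : X u) by (apply closed_subspace_sub; auto using subgrad_span_incl_decomposition).
  destruct (classic (u = hzero)) as [E0|Hne].
  { apply hsub_eq0 in E0. rewrite E0. auto. }
  exfalso. assert (HX' := HX). destruct HX' as (X0 & Xadd & Xscal & _).
  apply (dir_coercive_not_affine X (fun y => c y - l y) hzero u (f hzero - l hzero)
           (hinner xi0 u - hinner v u - l u)); auto.
  intro t. assert (E := Hf (hadd hzero (hscal t u))).
  rewrite (proj_id Z X HX _ (Xadd _ _ X0 (Xscal t u Xu))),
    (add_orth z0 xi0 _ _ Hxi0 (orth_scal Xf t u Ox)) in E.
  rewrite (Ladd _ _ X0 (Xscal t u Xu)), (Lscal t u Xu).
  hinner_simpl_in E. lra.
Qed.

Lemma decomposition_vector z0 xi0 : subdiff f z0 xi0 -> v = coproj Xf xi0.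
Proof.
  destruct Hdec as (HX & Ov & _). intro Hxi0.
  assert (OXf : orth Xf (hsub v (coproj Xf xi0))).
  { apply orth_sub; [intros x Hx; auto using subgrad_span_incl_decomposition|].
    apply orth_coproj, subgrad_span_closed. }
  assert (OX : orth X (hsub v (coproj Xf xi0)))
    by (intros x Hx; auto using decomposition_incl_subgrad_span).
  apply hsub_eq0, hinner_def.
  rewrite hinner_subl at 1.
  rewrite <- (decomposition_subgrad_inner z0 xi0 _ Hxi0 OX),
    (hinner_coproj_orth Z Xf subgrad_span_closed xi0 _ OXf).
  ring.
Qed.

Lemma decomposition_function x : Xf x -> c x = f x.
Proof.
  destruct Hdec as (HX & Ov & _ & _ & Hf). intro Hx.
  assert (Xx := subgrad_span_incl_decomposition x Hx).
  rewrite Hf, (proj_id Z X HX x Xx), (Ov x Xx). ring.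
Qed.

End Uniqueness.
End SubgradientSpan.

Theorem mainTheorem1 (Z : Hilbert) (f : Z -> R)
  (Hsep : separable Z) (Hcont : continuous_fun f) (Hconv : convex f) :
  exists (X : Z -> Prop) (v : Z) (c : Z -> R),
    decomposition f X v c /\
    (forall X' v' c', decomposition f X' v' c' ->
       (forall z, X' z <-> X z) /\ v' = v /\ (forall x, X x -> c' x = c x)) /\
    (forall z, X z <-> closed_span
       (fun d => exists u w z1 y1, subdiff f z1 u /\ subdiff f y1 w /\ d = hsub u w) z) /\
    (forall z0 xi0, subdiff f z0 xi0 -> v = coproj X xi0).
Proof.
  destruct (subdiff_exists Z f Hcont Hconv) as [q0 [xi0 Hxi0]].
  exists (subgrad_span f), (coproj (subgrad_span f) xi0), f.
  split; [|split; [|split]].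
  - apply (subgrad_decomposition Z f Hcont Hconv q0); auto.
  - intros X' v' c' Hdec. split; [|split].
    + intro z. split.
      * apply (decomposition_incl_subgrad_span Z f Hcont Hconv X' v' c' Hdec).
      * apply (subgrad_span_incl_decomposition Z f X' v' c' Hdec).
    + apply (decomposition_vector Z f Hcont Hconv X' v' c' Hdec q0), Hxi0.
    + apply (decomposition_function Z f X' v' c' Hdec).
  - intro z. reflexivity.
  - intros z0 xi Hxi. apply (subgrad_coproj_eq Z f q0 z0); auto.
Qed.
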